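(* Let $B\in M_2(\mathbb C)$ have rank one. Then the following are equivalent: (i) $E_{11}\perp B$ and every matrix in $E_{11}^\perp\cap B^\perp$ has rank at most one; (ii) $B\in(\mathbb C E_{12}\cup\mathbb C E_{21})\setminus\{0\}$.
   Context: $M_2(\mathbb C)$ carries the operator (spectral) norm; $E_{ij}$ are matrix units. $X\perp Y$ (Birkhoff–James orthogonality) means $\|X+\lambda Y\|\ge\|X\|$ for all $\lambda\in\mathbb C$, and $X^\perp:=\{Y: X\perp Y\}$. *)

From HB Require Import structures.
From mathcomp Require Import all_boot all_order all_algebra.
From mathcomp Require Import complex.
From mathcomp Require Import all_classical reals.
Set Implicit Arguments. Unset Strict Implicit. Unset Printing Implicit Defensive.
Import Order.TTheory GRing.Theory Num.Theory ComplexField.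
Local Open Scope ring_scope.
Local Open Scope classical_set_scope.

Definition vnorm (R : realType) (v : 'cV[R[i]]_2) : R :=
  Num.sqrt (\sum_(k < 2) ((complex.Re (v k 0)) ^+ 2 + (complex.Im (v k 0)) ^+ 2)).

Definition opnorm (R : realType) (X : 'M[R[i]]_2) : R :=
  sup [set vnorm (X *m v) | v in [set v : 'cV[R[i]]_2 | vnorm v <= 1]].

(* Birkhoff-James orthogonality: X _|_ Y iff ||X + lam Y|| >= ||X|| for all lam in C. *)
Definition bj_orth (R : realType) (X Y : 'M[R[i]]_2) : Prop :=
  forall lam : R[i], opnorm X <= opnorm (X + lam *: Y).

Definition E (R : realType) (i j : 'I_2) : 'M[R[i]]_2 := delta_mx i j.

From HB Require Import structures.
From mathcomp Require Import all_boot all_order all_algebra.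
From mathcomp Require Import complex.
From mathcomp Require Import all_classical reals.
From mathcomp Require Import ring lra.
Import Order.TTheory GRing.Theory Num.Theory ComplexField.
Local Open Scope ring_scope.

(* Everything rests on ‖M‖ <= ‖M‖_F and on ‖M‖ >= |Mw| / |w| for any test vector w.
   If |Bw|^2 = ‖B‖_F^2 |w|^2 (such w exist for every rank-one B) and Xw ⟂ Bw, then
   |(B + λX)w|^2 = |Bw|^2 + |λ|^2 |Xw|^2 gives B ⟂ X.  Conversely c E_ij ⟂ X forces
   X_ij = 0, since otherwise a suitable λ brings ‖c E_ij + λX‖_F below |c| <= ‖c E_ij‖.
   Hence E_11 ⟂ B gives B_11 = 0, and rank one gives B_12 B_21 = 0.  If B_22 != 0, an
   invertible X orthogonal to E_11 and B is written down explicitly; otherwise B is a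
   multiple of E_12 or E_21, and every X orthogonal to E_11 and B has two zero entries
   in its first row or column, so det X = 0.  Indices are 0-based: [E R 0 0] is E_11. *)

Lemma ord2P (k : 'I_2) : k = 0 \/ k = 1.
Proof. by case: k => [[|[|k]] k_lt2]; [left|right|]; try apply: val_inj. Qed.

Lemma sum2 (V : nmodType) (F : 'I_2 -> V) : \sum_(k < 2) F k = F 0 + F 1.
Proof. by rewrite big_ord_recl big_ord1; congr (F _ + F _); apply: val_inj. Qed.

Lemma det2 (F : comPzRingType) (A : 'M[F]_2) : \det A = A 0 0 * A 1 1 - A 0 1 * A 1 0.
Proof.
rewrite (expand_det_row A 0) sum2 /cofactor !det_mx11 !mxE /=.
have -> : lift 0 (0 : 'I_1) = 1 :> 'I_2 by apply: val_inj.
have -> : lift 1 (0 : 'I_1) = 0 :> 'I_2 by apply: val_inj.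
by rewrite expr0 expr1 mul1r mulN1r mulrN.
Qed.

Lemma mxrank_lt_det0 (F : fieldType) n (A : 'M[F]_n) : \det A = 0 -> (\rank A < n)%N.
Proof.
move=> detA0; have : ~~ row_free A by rewrite row_free_unit unitmxE detA0 unitr0.
by rewrite /row_free ltn_neqAle rank_leq_row andbT.
Qed.

Section BirkhoffJamesM2.
Set Implicit Arguments.
Context {R : realType}.
Local Open Scope classical_set_scope.

Definition sqnorm (z : R[i]) : R := complex.Re z ^+ 2 + complex.Im z ^+ 2.

Definition vsqnorm (v : 'cV[R[i]]_2) : R := \sum_(k < 2) sqnorm (v k 0).

Definition vdot (u v : 'cV[R[i]]_2) : R[i] := \sum_(k < 2) conjc (u k 0) * v k 0.

Definition frobsq (M : 'M[R[i]]_2) : R := \sum_(k < 2) \sum_(m < 2) sqnorm (M k m).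

Definition mx2 (a b c d : R[i]) : 'M[R[i]]_2 :=
  \matrix_(k, m) if k == 0 then (if m == 0 then a else b) else (if m == 0 then c else d).

Definition col2 (x y : R[i]) : 'cV[R[i]]_2 := \col_k if k == 0 then x else y.

Lemma sqnorm_ge0 z : 0 <= sqnorm z.
Proof. by rewrite addr_ge0 // sqr_ge0. Qed.

Lemma sqnorm_gt0 z : z != 0 -> 0 < sqnorm z.
Proof.
case: z => a b nz; rewrite /sqnorm /=.
have [a0|a_neq0] := eqVneq a 0.
  have b_neq0 : b != 0 by apply: contraNneq nz => b0; rewrite a0 b0.
  by rewrite ltr_pwDr ?sqr_ge0 // exprn_even_gt0.
by rewrite ltr_pwDl ?sqr_ge0 // exprn_even_gt0.
Qed.

Lemma sqnorm0 : sqnorm 0 = 0.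
Proof. by rewrite /sqnorm /= expr0n addr0. Qed.

Lemma sqnorm1 : sqnorm 1 = 1.
Proof. by rewrite /sqnorm /= expr1n expr0n addr0. Qed.

Lemma sqnormM x y : sqnorm (x * y) = sqnorm x * sqnorm y.
Proof. by case: x => a b; case: y => c d; rewrite /sqnorm /=; ring. Qed.

Lemma sqnormN z : sqnorm (- z) = sqnorm z.
Proof. by case: z => a b; rewrite /sqnorm /= !sqrrN. Qed.

Lemma sqnormV z : sqnorm z^-1 = (sqnorm z)^-1.
Proof.
have [->|z_neq0] := eqVneq z 0; first by rewrite invr0 sqnorm0 invr0.
have sz_neq0 : sqnorm z != 0 by rewrite gt_eqF // sqnorm_gt0.
by apply: (mulIf sz_neq0); rewrite -sqnormM !mulVf // sqnorm1.
Qed.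

Lemma sqnormJ z : sqnorm (conjc z) = sqnorm z.
Proof. by case: z => a b; rewrite /sqnorm /= sqrrN. Qed.

Lemma sqnormD x y :
  sqnorm (x + y) = sqnorm x + sqnorm y + 2 * complex.Re (conjc x * y).
Proof. by case: x => a b; case: y => c d; rewrite /sqnorm /=; ring. Qed.

Lemma sqnorm_lagrange a b x y :
  sqnorm (a * x + b * y) + sqnorm (a * conjc y - b * conjc x) =
  (sqnorm a + sqnorm b) * (sqnorm x + sqnorm y).
Proof.
by case: a => ? ?; case: b => ? ?; case: x => ? ?; case: y => ? ?; rewrite /sqnorm /=; ring.
Qed.

(* With [l = - s c / a] and [s = |a|^2 / (|a|^2 + S)] the left-hand side equals
   [|c|^2 S / (|a|^2 + S)]. *)
Lemma sqnorm_shrink c a (S : R) : c != 0 -> a != 0 -> 0 <= S ->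
  exists l, sqnorm (c + l * a) + sqnorm l * S < sqnorm c.
Proof.
move=> c_neq0 a_neq0 S_ge0.
set p := sqnorm c; set q := sqnorm a.
have q_gt0 : 0 < q by exact: sqnorm_gt0.
have p_gt0 : 0 < p by exact: sqnorm_gt0.
have qS_gt0 : 0 < q + S by rewrite ltr_pwDl.
set s := q / (q + S).
exists (- (Complex s 0 * c / a)).
rewrite mulNr divfK // -{1}[c]mul1r -mulrBl sqnormN !sqnormM sqnormV -/p -/q.
have -> : sqnorm (1 - Complex s 0) = (1 - s) ^+ 2 by rewrite /sqnorm /=; ring.
have -> : sqnorm (Complex s 0) = s ^+ 2 by rewrite /sqnorm /=; ring.
have -> : (1 - s) ^+ 2 * p + s ^+ 2 * p / q * S = p * (S / (q + S)).
  by rewrite /s; field; rewrite !gt_eqF.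
by rewrite gtr_pMr // ltr_pdivrMr // mul1r ltr_pwDl.
Qed.

Lemma vnormE v : vnorm v = Num.sqrt (vsqnorm v).
Proof. by []. Qed.

Lemma vsqnormE v : vsqnorm v = sqnorm (v 0 0) + sqnorm (v 1 0).
Proof. exact: sum2. Qed.

Lemma vsqnorm_ge0 v : 0 <= vsqnorm v.
Proof. by apply: sumr_ge0 => k _; exact: sqnorm_ge0. Qed.

Lemma vsqnormZ a v : vsqnorm (a *: v) = sqnorm a * vsqnorm v.
Proof. by rewrite !vsqnormE !mxE !sqnormM -mulrDr. Qed.

Lemma vsqnormD u v :
  vsqnorm (u + v) = vsqnorm u + vsqnorm v + 2 * complex.Re (vdot u v).
Proof.
rewrite !vsqnormE /vdot sum2 !mxE !sqnormD.
by case: (conjc _ * _) => ? ?; case: (conjc _ * _) => ? ? /=; ring.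
Qed.

Lemma vdotZr u a v : vdot u (a *: v) = a * vdot u v.
Proof. by rewrite /vdot !sum2 !mxE; ring. Qed.

Lemma vsqnormD_orth u v a : vdot u v = 0 ->
  vsqnorm (u + a *: v) = vsqnorm u + sqnorm a * vsqnorm v.
Proof. by move=> uv0; rewrite vsqnormD vdotZr uv0 mulr0 mulr0 addr0 vsqnormZ. Qed.

Lemma vsqnorm_delta k : vsqnorm (delta_mx k 0) = 1.
Proof.
by rewrite vsqnormE !mxE; case: (ord2P k) => -> /=; rewrite sqnorm0 sqnorm1 ?addr0 ?add0r.
Qed.

Lemma vdot_deltal k v : vdot (delta_mx k 0) v = v k 0.
Proof.
rewrite /vdot sum2 !mxE !rmorph_nat.
by case: (ord2P k) => -> /=; rewrite ?mul0r ?mul1r ?addr0 ?add0r.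
Qed.

Lemma frobsqE M :
  frobsq M = sqnorm (M 0 0) + sqnorm (M 0 1) + sqnorm (M 1 0) + sqnorm (M 1 1).
Proof. by rewrite /frobsq !sum2 addrA. Qed.

Lemma mulmx2E (M : 'M[R[i]]_2) (v : 'cV[R[i]]_2) k :
  (M *m v) k 0 = M k 0 * v 0 0 + M k 1 * v 1 0.
Proof. by rewrite mxE sum2. Qed.

Lemma vsqnorm_mulmx_le M v : vsqnorm (M *m v) <= frobsq M * vsqnorm v.
Proof.
rewrite !vsqnormE !mulmx2E frobsqE.
have row0 := sqnorm_lagrange (M 0 0) (M 0 1) (v 0 0) (v 1 0).
have row1 := sqnorm_lagrange (M 1 0) (M 1 1) (v 0 0) (v 1 0).
have := sqnorm_ge0 (M 0 0 * conjc (v 1 0) - M 0 1 * conjc (v 0 0)).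
have := sqnorm_ge0 (M 1 0 * conjc (v 1 0) - M 1 1 * conjc (v 0 0)).
lra.
Qed.

Lemma frobsq_ge0 M : 0 <= frobsq M.
Proof. by do 2!(apply: sumr_ge0 => ? _); exact: sqnorm_ge0. Qed.

Lemma opnorm_ubound M :
  ubound [set vnorm (M *m v) | v in [set v | vnorm v <= 1]] (Num.sqrt (frobsq M)).
Proof.
move=> _ [v /= v_le1 <-]; rewrite ler_sqrt ?frobsq_ge0 //.
have v_sq_le1 : vsqnorm v <= 1.
  by rewrite -(sqr_sqrtr (vsqnorm_ge0 v)) exprn_ile1 ?sqrtr_ge0.
apply: (le_trans (vsqnorm_mulmx_le M v)).
by rewrite ler_piMr ?frobsq_ge0.
Qed.

Lemma opnorm_le_frobsq M : opnorm M <= Num.sqrt (frobsq M).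
Proof.
apply: ge_sup (opnorm_ubound M).
exists (vnorm (M *m 0)), 0 => //=.
by rewrite /vnorm big1 ?sqrtr0 // => k _; rewrite mxE; exact: sqnorm0.
Qed.

Lemma opnorm_ge_test M w K : 0 < vsqnorm w -> 0 <= K ->
  K ^+ 2 * vsqnorm w <= vsqnorm (M *m w) -> K <= opnorm M.
Proof.
move=> w_gt0 K_ge0 Mw_ge.
set v := Complex (Num.sqrt (vsqnorm w))^-1 0 *: w.
have scale_sq : sqnorm (Complex (Num.sqrt (vsqnorm w))^-1 0) = (vsqnorm w)^-1.
  by rewrite /sqnorm /= expr0n addr0 exprVn sqr_sqrtr ?ltW.
have v_unit : vsqnorm v = 1 by rewrite vsqnormZ scale_sq mulVf ?gt_eqF.
apply: (@le_trans _ _ (vnorm (M *m v))).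
  rewrite vnormE -(ger0_norm K_ge0) -sqrtr_sqr ler_sqrt ?vsqnorm_ge0 //.
  by rewrite -scalemxAr vsqnormZ scale_sq -(ler_pM2l w_gt0) mulVKf ?gt_eqF // mulrC.
apply: ub_le_sup; first by exists (Num.sqrt (frobsq M)); exact: opnorm_ubound.
by exists v => //=; rewrite vnormE v_unit sqrtr1.
Qed.

Lemma bj_orth_of_frobsq_norming B X w : 0 < vsqnorm w ->
  frobsq B * vsqnorm w <= vsqnorm (B *m w) -> vdot (B *m w) (X *m w) = 0 ->
  bj_orth B X.
Proof.
move=> w_gt0 w_norming BwXw0 l.
apply: le_trans (opnorm_le_frobsq B) _.
apply: (opnorm_ge_test _ _ _ w_gt0 (sqrtr_ge0 _)).
rewrite sqr_sqrtr ?frobsq_ge0 // mulmxDl -scalemxAl vsqnormD_orth //.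
by rewrite ler_wpDr ?mulr_ge0 ?sqnorm_ge0 ?vsqnorm_ge0.
Qed.

Lemma bj_orth_E00 (X : 'M[R[i]]_2) : X 0 0 = 0 -> bj_orth (E R 0 0) X.
Proof.
move=> X00; apply: (@bj_orth_of_frobsq_norming _ _ (delta_mx 0 0)).
- by rewrite vsqnorm_delta ltr01.
- by rewrite /E mul_delta_mx vsqnorm_delta frobsqE !mxE /= sqnorm1 !sqnorm0 !addr0 mulr1.
- by rewrite /E mul_delta_mx vdot_deltal mulmx2E !mxE /= X00 mulr0 mul0r addr0.
Qed.

Lemma opnorm_scale_E_ge k m c : Num.sqrt (sqnorm c) <= opnorm (c *: E R k m).
Proof.
apply: (@opnorm_ge_test _ (delta_mx m 0)); rewrite ?vsqnorm_delta ?ltr01 ?sqrtr_ge0 //.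
by rewrite -scalemxAl mul_delta_mx vsqnormZ vsqnorm_delta sqr_sqrtr ?sqnorm_ge0.
Qed.

Lemma frobsq_scale_E_add k m c l (X : 'M[R[i]]_2) :
  frobsq (c *: E R k m + l *: X) =
  sqnorm (c + l * X k m) + sqnorm l * (frobsq X - sqnorm (X k m)).
Proof.
rewrite !frobsqE /E !mxE.
by case: (ord2P k) => ->; case: (ord2P m) => -> /=;
  rewrite ?mulr0 ?mulr1 ?add0r ?addr0 ?sqnormM; ring.
Qed.

Lemma sqnorm_le_frobsq (M : 'M[R[i]]_2) k m : sqnorm (M k m) <= frobsq M.
Proof.
have := sqnorm_ge0 (M 0 0); have := sqnorm_ge0 (M 0 1).
have := sqnorm_ge0 (M 1 0); have := sqnorm_ge0 (M 1 1).
by rewrite frobsqE; case: (ord2P k) => ->; case: (ord2P m) => ->; lra.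
Qed.

Lemma bj_orth_scale_E_entry k m c (X : 'M[R[i]]_2) :
  c != 0 -> bj_orth (c *: E R k m) X -> X k m = 0.
Proof.
move=> c_neq0 cE_X; apply/eqP; apply: contraT => Xkm_neq0.
have rest_ge0 : 0 <= frobsq X - sqnorm (X k m) by rewrite subr_ge0 sqnorm_le_frobsq.
have [l l_shrinks] := sqnorm_shrink _ _ _ c_neq0 Xkm_neq0 rest_ge0.
have := le_trans (opnorm_scale_E_ge k m c) (le_trans (cE_X l) (opnorm_le_frobsq _)).
by rewrite ler_sqrt ?frobsq_ge0 // frobsq_scale_E_add leNgt l_shrinks.
Qed.

Lemma bj_orth_E_entry k m (X : 'M[R[i]]_2) : bj_orth (E R k m) X -> X k m = 0.
Proof. by rewrite -[E R k m]scale1r; exact: bj_orth_scale_E_entry (oner_neq0 _). Qed.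

Lemma mx2_eta (M : 'M[R[i]]_2) : M = mx2 (M 0 0) (M 0 1) (M 1 0) (M 1 1).
Proof.
by apply/matrixP => k m; rewrite !mxE; case: (ord2P k) => ->; case: (ord2P m) => ->.
Qed.

Lemma mx2_mul_col2 a b c d x y :
  mx2 a b c d *m col2 x y = col2 (a * x + b * y) (c * x + d * y).
Proof. by apply/matrixP => k m; rewrite ord1 mulmx2E !mxE; case: (ord2P k) => ->. Qed.

Lemma vsqnorm_col2 x y : vsqnorm (col2 x y) = sqnorm x + sqnorm y.
Proof. by rewrite vsqnormE !mxE. Qed.

Lemma vdot_col2 x y x' y' : vdot (col2 x y) (col2 x' y') = conjc x * x' + conjc y * y'.
Proof. by rewrite /vdot sum2 !mxE. Qed.

Lemma frobsq_mx2 a b c d :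
  frobsq (mx2 a b c d) = sqnorm a + sqnorm b + sqnorm c + sqnorm d.
Proof. by rewrite frobsqE !mxE. Qed.

Lemma det_mx2 a b c d : \det (mx2 a b c d) = a * d - b * c.
Proof. by rewrite det2 !mxE. Qed.

Lemma scale_E01 c : c *: E R 0 1 = mx2 0 c 0 0.
Proof.
by apply/matrixP => k m; rewrite !mxE; case: (ord2P k) => ->; case: (ord2P m) => -> /=;
  rewrite ?mulr0 ?mulr1.
Qed.

Lemma scale_E10 c : c *: E R 1 0 = mx2 0 0 c 0.
Proof.
by apply/matrixP => k m; rewrite !mxE; case: (ord2P k) => ->; case: (ord2P m) => -> /=;
  rewrite ?mulr0 ?mulr1.
Qed.

Lemma exists_unit_bj_orth_col1 b d : d != 0 ->
  exists X, [/\ bj_orth (E R 0 0) X, bj_orth (mx2 0 b 0 d) X & X \in unitmx].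
Proof.
move=> d_neq0; exists (mx2 0 (conjc d) 1 (- conjc b)); split.
- by apply: bj_orth_E00; rewrite mxE.
- apply: (@bj_orth_of_frobsq_norming _ _ (col2 0 1));
    rewrite ?mx2_mul_col2 ?vsqnorm_col2 ?frobsq_mx2 ?vdot_col2 ?sqnorm0 ?sqnorm1
            !(mulr0, mul0r, mulr1, add0r, addr0) ?ltr01 //.
  by rewrite mulrN mulrC subrr.
- by rewrite unitmxE det_mx2 unitfE mul0r sub0r mulr1 oppr_eq0 conjc_eq0.
Qed.

Lemma exists_unit_bj_orth_row1 c d : d != 0 ->
  exists X, [/\ bj_orth (E R 0 0) X, bj_orth (mx2 0 0 c d) X & X \in unitmx].
Proof.
move=> d_neq0; exists (mx2 0 1 (conjc d) (- conjc c)); split.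
- by apply: bj_orth_E00; rewrite mxE.
- apply: (@bj_orth_of_frobsq_norming _ _ (col2 (conjc c) (conjc d)));
    rewrite ?mx2_mul_col2 ?vsqnorm_col2 ?frobsq_mx2 ?vdot_col2 ?sqnormJ ?mul0r ?mul1r ?add0r.
  + by rewrite ltr_pwDr ?sqnorm_ge0 ?sqnorm_gt0.
  + have -> : sqnorm (c * conjc c + d * conjc d) = (sqnorm c + sqnorm d) ^+ 2.
      by case: c => ? ?; case: d d_neq0 => ? ? _; rewrite /sqnorm /=; ring.
    by rewrite sqnorm0 !add0r expr2.
  + by rewrite rmorph0 mul0r add0r mulNr (mulrC (conjc d)) subrr mulr0.
- by rewrite unitmxE det_mx2 unitfE mul0r sub0r mul1r oppr_eq0 conjc_eq0.
Qed.

End BirkhoffJamesM2.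

Theorem lemma5p1 (R : realType) (B : 'M[R[i]]_2) :
  \rank B = 1%N ->
  ((bj_orth (E R 0 0) B /\
    forall X : 'M[R[i]]_2, bj_orth (E R 0 0) X -> bj_orth B X -> (\rank X <= 1)%N)
   <->
   (B != 0 /\ exists c : R[i], B = c *: E R 0 1 \/ B = c *: E R 1 0)).
Proof.
move=> rkB1.
have B_neq0 : B != 0 by apply/eqP => B0; move: rkB1; rewrite B0 mxrank0.
have detB0 : \det B = 0.
  have [//|detB_neq0] := eqVneq (\det B) 0.
  by move: rkB1; rewrite mxrank_unit // unitmxE unitfE.
split=> [[E_B rank_le1] | [_ [c defB]]].
- have no_unit X : bj_orth (E R 0 0) X -> bj_orth B X -> X \notin unitmx.
    move=> E_X B_X; apply/negP => /mxrank_unit rkX.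
    by have := rank_le1 X E_X B_X; rewrite rkX.
  have [b [c [d defB]]] : exists b c d, B = mx2 0 b c d.
    by exists (B 0 1), (B 1 0), (B 1 1); rewrite -(bj_orth_E_entry E_B) -mx2_eta.
  subst B; split=> //.
  move: detB0; rewrite det_mx2 mul0r sub0r => /eqP; rewrite oppr_eq0 mulf_eq0.
  have [-> | d_neq0] := eqVneq d 0; case/orP => /eqP bc0; subst.
  + by exists c; right; rewrite scale_E10.
  + by exists b; left; rewrite scale_E01.
  + have [X [E_X B_X X_unit]] := exists_unit_bj_orth_row1 c d d_neq0.
    by case/negP: (no_unit X E_X B_X).
  + have [X [E_X B_X X_unit]] := exists_unit_bj_orth_col1 b d d_neq0.
    by case/negP: (no_unit X E_X B_X).
- have c_neq0 : c != 0.
    by apply: contraNneq B_neq0 => c0; case: defB => ->; rewrite c0 scale0r.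
  case: defB => ->; split=> [|X E_X cE_X].
  1,3: by apply: bj_orth_E00; rewrite !mxE mulr0.
  all: rewrite -ltnS; apply: mxrank_lt_det0.
  all: rewrite det2 (bj_orth_E_entry E_X) (bj_orth_scale_E_entry c_neq0 cE_X).
  all: by rewrite !(mul0r, mulr0) subr0.
Qed.
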